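(* Let $H$ be a separable complex Hilbert space, $(\Omega,\mu)$ a measure space with positive measure, and let $K\in B(H)$ have closed range. Let $F:\Omega\to H$ be a Parseval continuous $K$-frame of $H$. Then $K^{\dagger}F$ is the canonical dual continuous $K$-Bessel sequence of $F$; that is, $K^{\dagger}F$ is a dual continuous $K$-Bessel sequence of $F$ and $\|T_{K^{\dagger}F}\|\le\|T_G\|$ for every dual continuous $K$-Bessel sequence $G$ of $F$, where $T_{K^\dagger F}$ and $T_G$ denote the analysis operators of $K^{\dagger}F$ and $G$.
   Context: A map $F:\Omega\to H$ is weakly measurable if $\omega\mapsto\langle f,F(\omega)\rangle$ is measurable for every $f\in H$. A continuous Bessel sequence is a weakly measurable $G$ with $\int_\Omega|\langle f,G(\omega)\rangle|^2\,d\mu(\omega)\le B\|f\|^2$ for all $f\in H$, for some $B>0$; its analysis operator is $T_G:H\to L^2(\Omega,\mu)$, $T_Gf=\{\langle f,G(\omega)\rangle\}_{\omega}$. A Parseval continuous $K$-frame is a weakly measurable $F$ with $\int_\Omega|\langle f,F(\omega)\rangle|^2\,d\mu(\omega)=\|K^{\ast}f\|^2$ for all $f\in H$. A dual continuous $K$-Bessel sequence of $F$ is a continuous Bessel sequence $G$ with $Kf=\int_\Omega\langle f,G(\omega)\rangle F(\omega)\,d\mu(\omega)$ for all $f\in H$. $K^{\dagger}$ denotes the Moore–Penrose pseudo-inverse of the closed-range operator $K$. *)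

From HB Require Import structures.
From mathcomp Require Import all_boot all_order all_algebra.
From mathcomp Require Import all_classical all_reals all_analysis.
From mathcomp Require Import complex.
Set Implicit Arguments. Unset Strict Implicit. Unset Printing Implicit Defensive.
Import Order.TTheory GRing.Theory Num.Theory.
Local Open Scope ring_scope.
Local Open Scope classical_set_scope.

Section HilbertDefs.
Context {R : realType} {H : lmodType R[i]}.
Variable ip : H -> H -> R[i].  (* inner product <x, y>, linear in x *)

Definition nrm2 (x : H) : R := complex.Re (ip x x).

Definition cabs2 (z : R[i]) : R := complex.Re z ^+ 2 + complex.Im z ^+ 2.

Definition is_inner_product : Prop :=
  [/\ (forall (a : R[i]) (x y z : H), ip (a *: x + y) z = a * ip x z + ip y z),
      (forall x y : H, ip y x = (ip x y)^*),
      (forall x : H, 0 <= ip x x) &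
      (forall x : H, ip x x = 0 -> x = 0)].

Definition is_complete : Prop :=
  forall u : nat -> H,
    (forall eps : R, 0 < eps -> exists N : nat, forall m n : nat,
        (N <= m)%N -> (N <= n)%N -> nrm2 (u m - u n) < eps) ->
    exists l : H, forall eps : R, 0 < eps -> exists N : nat, forall n : nat,
        (N <= n)%N -> nrm2 (u n - l) < eps.

Definition is_separable : Prop :=
  exists e : nat -> H, forall (x : H) (eps : R), 0 < eps ->
    exists n : nat, nrm2 (x - e n) < eps.

Definition is_sep_hilbert : Prop :=
  [/\ is_inner_product, is_complete & is_separable].

Definition bounded_op (T : H -> H) : Prop :=
  (forall (a : R[i]) (x y : H), T (a *: x + y) = a *: T x + T y) /\
  exists M : R, forall x : H, nrm2 (T x) <= M * nrm2 x.

Definition closed_range (T : H -> H) : Prop :=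
  forall (u : nat -> H) (y : H),
    (forall eps : R, 0 < eps -> exists N : nat, forall n : nat,
        (N <= n)%N -> nrm2 (T (u n) - y) < eps) ->
    exists x : H, T x = y.

Definition is_adjoint (T Tadj : H -> H) : Prop :=
  forall x y : H, ip (T x) y = ip x (Tadj y).

Definition is_MP_inverse (T Tdag : H -> H) : Prop :=
  [/\ bounded_op Tdag,
      (forall x, T (Tdag (T x)) = T x),
      (forall x, Tdag (T (Tdag x)) = Tdag x),
      (forall x y, ip (T (Tdag x)) y = ip x (T (Tdag y))) &
      (forall x y, ip (Tdag (T x)) y = ip x (Tdag (T y)))].

Context {d : measure_display} {Omega : measurableType d}.
Variable mu : {measure set Omega -> \bar R}.

Definition weakly_measurable (F : Omega -> H) : Prop :=
  forall f : H,
    measurable_fun setT (fun w => complex.Re (ip f (F w))) /\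
    measurable_fun setT (fun w => complex.Im (ip f (F w))).

Definition sq_coeff_int (G : Omega -> H) (f : H) : \bar R :=
  (\int[mu]_(w in setT) (cabs2 (ip f (G w)))%:E)%E.

Definition cont_Bessel (G : Omega -> H) : Prop :=
  weakly_measurable G /\
  exists B : R, 0 < B /\ forall f : H, (sq_coeff_int G f <= (B * nrm2 f)%:E)%E.

Definition parseval_cont_Kframe (Kadj : H -> H) (F : Omega -> H) : Prop :=
  weakly_measurable F /\
  forall f : H, sq_coeff_int F f = (nrm2 (Kadj f))%:E.

Definition cintegrable (h : Omega -> R[i]) : Prop :=
  mu.-integrable setT (fun w => (complex.Re (h w))%:E) /\
  mu.-integrable setT (fun w => (complex.Im (h w))%:E).

Definition cintegral (h : Omega -> R[i]) : R[i] :=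
  Complex (fine (\int[mu]_(w in setT) (complex.Re (h w))%:E)%E)
          (fine (\int[mu]_(w in setT) (complex.Im (h w))%:E)%E).

(* G is a dual continuous K-Bessel sequence of F :
   K f = int <f, G w> F w dmu (weakly: tested against every g) *)
Definition dual_cont_KBessel (K : H -> H) (F G : Omega -> H) : Prop :=
  cont_Bessel G /\
  forall f g : H,
    cintegrable (fun w => ip f (G w) * ip (F w) g) /\
    ip (K f) g = cintegral (fun w => ip f (G w) * ip (F w) g).

(* squared operator norm of the analysis operator T_G : H -> L^2(Omega, mu):
   ||T_G||^2 = sup_{||f|| <= 1} ||T_G f||^2 *)
Definition analysis_opnorm2 (G : Omega -> H) : \bar R :=
  ereal_sup [set sq_coeff_int G f | f in [set f : H | nrm2 f <= 1]].

End HilbertDefs.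

From HB Require Import structures.
From mathcomp Require Import all_boot all_order all_algebra.
From mathcomp Require Import all_classical all_reals all_analysis.
From mathcomp Require Import complex.
From mathcomp Require Import ring lra.
Import Order.TTheory GRing.Theory Num.Theory.
Local Open Scope ring_scope.
Local Open Scope classical_set_scope.

(* The adjoint (K^†)^* of the bounded operator K^† exists (Riesz representation,
   obtained by minimizing the norm on the hyperplane {φ = 1}), and the Penrose
   equations give K^* (K^†)^* = K^† K.  Since <f, K^† F w> = <(K^†)^* f, F w>,
   the Parseval identity for F yields ∫ |<f, K^† F w>|^2 = ||K^† K f||^2, so K^† F
   is Bessel, and by polarization ∫ <f, K^† F w><F w, g> = <K^† K f, K^* g>
   = <K f, g>, so K^† F is a dual of F.  For another dual G and z = (K^†)^* f, the
   duality of G and the Parseval identity give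
   Re ∫ <f, G w><F w, z> = ||K^† K f||^2 = ∫ |<z, F w>|^2; integrating the
   pointwise inequality 2 Re (g conj a) - |a|^2 <= |g|^2 then shows
   ||T_{K^† F} f|| <= ||T_G f|| for every f. *)

Section ComplexParts.
Context {R : realType}.
Implicit Types z w : R[i].
Local Notation Re := complex.Re.
Local Notation Im := complex.Im.

Lemma complex_ext z w : Re z = Re w -> Im z = Im w -> z = w.
Proof. by case: z => a b; case: w => c e /= -> ->. Qed.

Lemma ReD z w : Re (z + w) = Re z + Re w. Proof. by case: z; case: w. Qed.
Lemma ImD z w : Im (z + w) = Im z + Im w. Proof. by case: z; case: w. Qed.
Lemma ReN z : Re (- z) = - Re z. Proof. by case: z. Qed.
Lemma ImN z : Im (- z) = - Im z. Proof. by case: z. Qed.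
Lemma ReM z w : Re (z * w) = Re z * Re w - Im z * Im w. Proof. by case: z; case: w. Qed.
Lemma ImM z w : Im (z * w) = Re z * Im w + Im z * Re w. Proof. by case: z; case: w. Qed.
Lemma ReJ z : Re z^* = Re z. Proof. by case: z. Qed.
Lemma ImJ z : Im z^* = - Im z. Proof. by case: z. Qed.

Lemma cabs2_ge0 z : 0 <= cabs2 z.
Proof. by rewrite /cabs2 addr_ge0 // sqr_ge0. Qed.

Lemma cabs2_eq0 z : cabs2 z = 0 -> z = 0.
Proof.
rewrite /cabs2 => /eqP; rewrite paddr_eq0 ?sqr_ge0 // !sqrf_eq0.
by case/andP => /eqP hr /eqP hi; apply: complex_ext.
Qed.

Lemma ReMJ_le_cabs2 z w : 2 * Re (z * w^*) - cabs2 w <= cabs2 z.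
Proof.
rewrite /cabs2 ReM ReJ ImJ.
have := sqr_ge0 (Re z - Re w); have := sqr_ge0 (Im z - Im w); nra.
Qed.

Lemma ge0_complexE z : 0 <= z -> z = Complex (Re z) 0.
Proof. by move=> z0; apply: complex_ext => //=; rewrite (ger0_Im z0). Qed.
End ComplexParts.

Ltac simp_ReIm :=
  rewrite ?(ReD, ImD, ReN, ImN, ReM, ImM, ReJ, ImJ) /=.

Section InnerProduct.
Context {R : realType} {H : lmodType R[i]} {ip : H -> H -> R[i]}.
Hypothesis hip : is_inner_product ip.
Local Notation Re := complex.Re.
Local Notation Im := complex.Im.
Local Notation nrm2 := (nrm2 ip).

Lemma ipDZl a x y z : ip (a *: x + y) z = a * ip x z + ip y z.
Proof. by case: hip. Qed.

Lemma ipC x y : ip y x = (ip x y)^*.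
Proof. by case: hip. Qed.

Lemma ip0l z : ip 0 z = 0.
Proof.
have := ipDZl 1 0 0 z; rewrite scale1r addr0 mul1r => h.
by apply: (@addrI _ (ip 0 z)); rewrite addr0 -h.
Qed.

Lemma ipDl x y z : ip (x + y) z = ip x z + ip y z.
Proof. by have := ipDZl 1 x y z; rewrite scale1r mul1r. Qed.

Lemma ipZl a x z : ip (a *: x) z = a * ip x z.
Proof. by have := ipDZl a x 0 z; rewrite !addr0 ip0l addr0. Qed.

Lemma ipNl x z : ip (- x) z = - ip x z.
Proof. by rewrite -scaleN1r ipZl mulN1r. Qed.

Lemma ip0r z : ip z 0 = 0.
Proof. by rewrite ipC ip0l conjC0. Qed.

Lemma ipDr z x y : ip z (x + y) = ip z x + ip z y.
Proof. by rewrite !(ipC _ z) ipDl rmorphD. Qed.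

Lemma ipZr z a x : ip z (a *: x) = a^* * ip z x.
Proof. by rewrite !(ipC _ z) ipZl rmorphM. Qed.

Lemma ipNr z x : ip z (- x) = - ip z x.
Proof. by rewrite !(ipC _ z) ipNl rmorphN. Qed.

Lemma ipBr z x y : ip z (x - y) = ip z x - ip z y.
Proof. by rewrite ipDr ipNr. Qed.

Lemma ipxx x : ip x x = Complex (nrm2 x) 0.
Proof. by case: hip => _ _ ge0 _; exact: ge0_complexE. Qed.

Lemma nrm2_ge0 x : 0 <= nrm2 x.
Proof. by case: hip => _ _ ge0 _; have := ge0 x; rewrite lecE => /andP[]. Qed.

Lemma nrm2_eq0 {x} : nrm2 x = 0 -> x = 0.
Proof. by case: hip => _ _ _ def0 e; apply: def0; rewrite ipxx e. Qed.

Lemma ip_ext u v : (forall x, ip x u = ip x v) -> u = v.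
Proof.
move=> e; apply/eqP; rewrite -subr_eq0; apply/eqP.
by case: hip => _ _ _ def0; apply: def0; rewrite ipBr e subrr.
Qed.

Lemma nrm2DZ x y c :
  nrm2 (x + c *: y) = nrm2 x + cabs2 c * nrm2 y + 2 * Re (c^* * ip x y).
Proof.
rewrite /nrm2 ipDl !ipDr !ipZl !ipZr (ipC y x) (ipxx y) /cabs2; simp_ReIm; ring.
Qed.

Lemma nrm2N x : nrm2 (- x) = nrm2 x.
Proof. by rewrite /nrm2 ipNl ipNr opprK. Qed.

Lemma nrm2Z c x : nrm2 (c *: x) = cabs2 c * nrm2 x.
Proof. by rewrite /nrm2 ipZl ipZr ipxx /cabs2; simp_ReIm; ring. Qed.

Lemma nrm2D x y : nrm2 (x + y) = nrm2 x + nrm2 y + 2 * Re (ip x y).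
Proof. by rewrite -[y]scale1r nrm2DZ scale1r /cabs2; simp_ReIm; ring. Qed.

Lemma nrm2B x y : nrm2 (x - y) = nrm2 x + nrm2 y - 2 * Re (ip x y).
Proof. by rewrite nrm2D nrm2N ipNr; simp_ReIm; ring. Qed.

Lemma cauchy_schwarz x y : cabs2 (ip x y) <= nrm2 x * nrm2 y.
Proof.
have [y0|ny0] := eqVneq (nrm2 y) 0.
  by rewrite y0 mulr0 (nrm2_eq0 y0) ip0r /cabs2 /= expr0n /= addr0.
have yp : 0 < nrm2 y by rewrite lt_def ny0 nrm2_ge0.
pose c := Complex (- Re (ip x y) / nrm2 y) (- Im (ip x y) / nrm2 y).
have := nrm2_ge0 (x + c *: y).
have -> : nrm2 (x + c *: y) = nrm2 x - cabs2 (ip x y) / nrm2 y.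
  by rewrite nrm2DZ /cabs2 /c; simp_ReIm; field.
by rewrite subr_ge0 ler_pdivrMr.
Qed.

Lemma Re_ip_le_young x y t : 0 < t -> 2 * Re (ip x y) <= t * nrm2 x + nrm2 y / t.
Proof.
move=> tp; have := nrm2_ge0 (y + Complex (- t) 0 *: x).
rewrite nrm2DZ (ipC x y) /cabs2; simp_ReIm => h.
rewrite -(ler_pM2l tp) mulrDr [t * (_ / t)]mulrC divfK ?gt_eqF //; nra.
Qed.

Lemma nrm2D_le_young x y t : 0 < t ->
  nrm2 (x + y) <= (1 + t) * nrm2 x + (1 + t^-1) * nrm2 y.
Proof.
move=> tp; rewrite nrm2D; have := Re_ip_le_young x y t tp.
rewrite !mulrDl !mul1r [_ / t]mulrC; lra.
Qed.

Lemma ip_eq0_of_nrm2_min u n :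
  (forall c, nrm2 u <= nrm2 (u + c *: n)) -> ip u n = 0.
Proof.
move=> umin; apply: cabs2_eq0; apply/eqP; rewrite eq_le cabs2_ge0 andbT.
have N0 := nrm2_ge0 n; set N := nrm2 n in N0 *.
have sp : 0 < (N + 1)^-1 by rewrite invr_gt0; lra.
have sN : (N + 1)^-1 * N <= 1 by rewrite mulrC ler_pdivrMr; lra.
have := umin (Complex (- (N + 1)^-1 * Re (ip u n)) (- (N + 1)^-1 * Im (ip u n))).
rewrite nrm2DZ /cabs2; simp_ReIm; rewrite -/N.
move: (N + 1)^-1 sp sN (Re (ip u n)) (Im (ip u n)) => s sp sN a b h.
have q0 : 0 <= a ^+ 2 + b ^+ 2 by rewrite addr_ge0 ?sqr_ge0.
have : s * (a ^+ 2 + b ^+ 2) <= 0 by nra.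
by rewrite pmulr_rle0.
Qed.

Lemma nrm2_le_of_approx u d : 0 <= d ->
  (forall eps, 0 < eps -> exists x, nrm2 (x - u) < eps /\ nrm2 x < d + eps) ->
  nrm2 u <= d.
Proof.
move=> d0 approx.
have le_scaled t : 0 < t -> nrm2 u <= (1 + t) * d.
  move=> tp; apply/ler_addgt0Pr => e ep.
  have kp : 0 < 1 + t + (1 + t^-1) by rewrite !addr_gt0 ?invr_gt0.
  set k := e / (1 + t + (1 + t^-1)).
  have [x [xu xd]] := approx k (divr_gt0 ep kp).
  have := nrm2D_le_young x (u - x) t tp; rewrite addrC subrK -opprB nrm2N.
  have h1 : (1 + t) * nrm2 x <= (1 + t) * (d + k).
    by rewrite ler_wpM2l ?ltW //; lra.
  have h2 : (1 + t^-1) * nrm2 (x - u) <= (1 + t^-1) * k.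
    by rewrite ler_wpM2l ?ltW // addr_gt0 ?invr_gt0.
  have -> : (1 + t) * d + e = (1 + t) * (d + k) + (1 + t^-1) * k.
    by rewrite /k; field; rewrite !gt_eqF //; nra.
  move=> ?; lra.
apply/ler_addgt0Pr => e ep.
have tp : 0 < e / (d + 1) by rewrite divr_gt0 //; lra.
apply: (le_trans (le_scaled _ tp)).
rewrite mulrDl mul1r lerD2l mulrAC ler_pdivrMr; nra.
Qed.
End InnerProduct.

Lemma inv_succ_lt {R : realType} {e : R} :
  0 < e -> exists N : nat, forall n, (N <= n)%N -> n.+1%:R^-1 < e.
Proof.
move=> ep; exists (Num.truncn e^-1) => n hn.
rewrite -[e]invrK ltf_pV2 ?posrE ?invr_gt0 ?ltr0Sn //.
by apply: lt_le_trans (truncnS_gt _) _; rewrite ler_nat ltnS.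
Qed.

Section Riesz.
Context {R : realType} {H : lmodType R[i]} {ip : H -> H -> R[i]}.
Hypotheses (hip : is_inner_product ip) (hc : is_complete ip).
Local Notation nrm2 := (nrm2 ip).
Variables (phi : H -> R[i]) (C : R).
Hypothesis phi_linear : forall a x y, phi (a *: x + y) = a * phi x + phi y.
Hypothesis phi_bounded : forall x, cabs2 (phi x) <= C * nrm2 x.

Let phi0 : phi 0 = 0.
Proof.
have := phi_linear 1 0 0; rewrite scale1r addr0 mul1r => h.
by apply: (@addrI _ (phi 0)); rewrite addr0 -h.
Qed.

Let phiD x y : phi (x + y) = phi x + phi y.
Proof. by have := phi_linear 1 x y; rewrite scale1r mul1r. Qed.

Let phiZ a x : phi (a *: x) = a * phi x.
Proof. by have := phi_linear a x 0; rewrite !addr0 phi0 addr0. Qed.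

Let phiB x y : phi (x - y) = phi x - phi y.
Proof. by rewrite phiD -scaleN1r phiZ mulN1r. Qed.

Hypothesis phi_neq0 : exists y, phi y != 0.

Let phi_eq1 : exists x, phi x = 1.
Proof. by have [y y0] := phi_neq0; exists ((phi y)^-1 *: y); rewrite phiZ mulVf. Qed.

Let dist2 := inf [set nrm2 x | x in [set x | phi x = 1]].

Let dist2_lbound : lbound [set nrm2 x | x in [set x | phi x = 1]] 0.
Proof. by move=> _ [y _ <-]; exact: (nrm2_ge0 hip). Qed.

Let dist2_le {x} : phi x = 1 -> dist2 <= nrm2 x.
Proof. by move=> x1; apply: ge_inf; [exists 0; exact: dist2_lbound | exists x]. Qed.

Let dist2_ge0 : 0 <= dist2.
Proof.
by have [x x1] := phi_eq1; apply: lb_le_inf dist2_lbound; exists (nrm2 x), x.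
Qed.

Let hyperplane_parallelogram {x y} : phi x = 1 -> phi y = 1 ->
  nrm2 (x - y) <= 2 * (nrm2 x - dist2) + 2 * (nrm2 y - dist2).
Proof.
move=> x1 y1; set m := Complex 2^-1 0 *: (x + y).
have m1 : phi m = 1.
  by rewrite phiZ phiD x1 y1; apply: complex_ext; simp_ReIm; field.
have := dist2_le m1; rewrite /m (nrm2Z hip) (nrm2D hip) (nrm2B hip) /cabs2 /=; lra.
Qed.

Let near_min_limit : exists u, forall eps, 0 < eps ->
  exists x, [/\ phi x = 1, nrm2 (x - u) < eps & nrm2 x < dist2 + eps].
Proof.
have inf_dist2 : has_inf [set nrm2 x | x in [set x | phi x = 1]].
  by have [x x1] := phi_eq1; split; [exists (nrm2 x), x | exists 0; exact: dist2_lbound].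
have near_min k : exists x, phi x = 1 /\ nrm2 x < dist2 + k.+1%:R^-1.
  have kp : 0 < k.+1%:R^-1 :> R by rewrite invr_gt0.
  have [_ [x x1 <-] xlt] := inf_adherent kp inf_dist2.
  by exists x.
have [xs xs_min] := choice near_min.
have xs_cauchy eps : 0 < eps -> exists N, forall m n,
    (N <= m)%N -> (N <= n)%N -> nrm2 (xs m - xs n) < eps.
  move=> ep; have e4 : 0 < eps / 4 by rewrite divr_gt0.
  have [N hN] := inv_succ_lt e4.
  exists N => m n mN nN.
  have [m1 mlt] := xs_min m; have [n1 nlt] := xs_min n.
  apply: le_lt_trans (hyperplane_parallelogram m1 n1) _.
  have := hN m mN; have := hN n nN.
  move: mlt nlt; move: (m.+1%:R^-1 : R) (n.+1%:R^-1 : R) => a b; lra.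
have [u xs_u] := hc xs xs_cauchy.
exists u => eps ep.
have [N1 hN1] := inv_succ_lt ep; have [N2 hN2] := xs_u eps ep.
have [x1 xlt] := xs_min (maxn N1 N2).
exists (xs (maxn N1 N2)); split=> //; first exact/hN2/leq_maxr.
by apply: (lt_trans xlt); rewrite ltrD2l; apply/hN1/leq_maxl.
Qed.

Let hyperplane_min : exists u, phi u = 1 /\ nrm2 u <= dist2.
Proof.
have [u u_lim] := near_min_limit; exists u; split.
  apply/eqP; rewrite -subr_eq0; apply/eqP/cabs2_eq0/eqP.
  rewrite eq_le cabs2_ge0 andbT; apply/ler_addgt0Pr => e ep; rewrite add0r.
  have Cp : 0 < `|C| + 1 by rewrite ltr_wpDl.
  have [x [x1 xu _]] := u_lim _ (divr_gt0 ep Cp).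
  rewrite -x1 -phiB; apply: le_trans (phi_bounded _) _.
  rewrite -opprB (nrm2N hip); move: xu; rewrite ltr_pdivlMr // => xu.
  have := nrm2_ge0 hip (x - u); have := ler_norm C; nra.
apply: (nrm2_le_of_approx hip _ _ dist2_ge0) => eps ep.
by have [x [_ xu xd]] := u_lim eps ep; exists x.
Qed.

Lemma riesz_representation_neq0 : exists z, forall y, phi y = ip y z.
Proof.
have [u [u1 umin]] := hyperplane_min.
have u_perp n : phi n = 0 -> ip u n = 0.
  move=> n0; apply: (ip_eq0_of_nrm2_min hip) => c.
  by apply: (le_trans umin); apply: dist2_le; rewrite phiD phiZ n0 mulr0 addr0.
have u_neq0 : nrm2 u != 0.
  apply/eqP => /(nrm2_eq0 hip) u0.
  by move: u1; rewrite u0 phi0 => /eqP; rewrite eq_sym oner_eq0.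
exists (Complex (nrm2 u)^-1 0 *: u) => y.
have := u_perp (y - phi y *: u); rewrite phiB phiZ u1 mulr1 subrr.
rewrite (ipBr hip) (ipZr hip) (ipxx hip) => /(_ erefl)/eqP; rewrite subr_eq0 => /eqP uy.
rewrite (ipZr hip) (ipC hip u y) uy.
by apply: complex_ext; simp_ReIm; field; exact: u_neq0.
Qed.
End Riesz.

Lemma riesz_representation {R : realType} {H : lmodType R[i]} {ip : H -> H -> R[i]}
    (hip : is_inner_product ip) (hc : is_complete ip) (phi : H -> R[i]) (C : R) :
  (forall a x y, phi (a *: x + y) = a * phi x + phi y) ->
  (forall x, cabs2 (phi x) <= C * nrm2 ip x) ->
  exists z, forall y, phi y = ip y z.
Proof.
move=> phi_linear phi_bounded.
have [phi_neq0|phi_eq0] := pselect (exists y, phi y != 0).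
  exact: riesz_representation_neq0 phi_linear phi_bounded phi_neq0.
exists 0 => y; rewrite (ip0r hip); apply/eqP/negP => /negP y0.
by apply: phi_eq0; exists y.
Qed.

Section Adjoint.
Context {R : realType} {H : lmodType R[i]} {ip : H -> H -> R[i]}.
Hypothesis hip : is_inner_product ip.

Lemma adjoint_exists {T : H -> H} : is_complete ip -> bounded_op ip T ->
  exists Tadj, is_adjoint ip T Tadj.
Proof.
move=> hc [T_linear [M T_bounded]].
suff Tadj_at f : exists z, forall y, ip (T y) f = ip y z.
  by have [Tadj hTadj] := choice Tadj_at; exists Tadj => x y; exact: hTadj.
apply: (riesz_representation hip hc _ (M * nrm2 ip f)) => [a x y|y].
  by rewrite T_linear (ipDZl hip).
apply: le_trans (cauchy_schwarz hip (T y) f) _.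
by rewrite mulrAC ler_wpM2r ?nrm2_ge0.
Qed.

Lemma bounded_op_pos (T : H -> H) : bounded_op ip T ->
  exists M, 0 < M /\ forall x, nrm2 ip (T x) <= M * nrm2 ip x.
Proof.
case=> _ [M T_bounded]; exists (`|M| + 1); split=> [|x]; first by rewrite ltr_wpDl.
apply: le_trans (T_bounded x) _; rewrite ler_wpM2r ?nrm2_ge0 //.
by rewrite (le_trans (ler_norm M)) // lerDl.
Qed.

Context {T Tadj : H -> H}.
Hypothesis hTadj : is_adjoint ip T Tadj.

Lemma adjoint_ipC x y : ip x (T y) = ip (Tadj x) y.
Proof. by rewrite (ipC hip) hTadj -(ipC hip). Qed.

Lemma adjointDZ x y c : Tadj (x + c *: y) = Tadj x + c *: Tadj y.
Proof.
by apply: (ip_ext hip) => z; rewrite -hTadj !(ipDr hip) !(ipZr hip) -!hTadj.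
Qed.
End Adjoint.

Section Integration.
Context {R : realType} {d : measure_display} {Omega : measurableType d}.
Variable mu : {measure set Omega -> \bar R}.

Lemma integrable_of_integral_le {h : Omega -> R} {v : R} :
  measurable_fun setT h -> (forall w, 0 <= h w) ->
  (\int[mu]_(w in setT) (h w)%:E <= v%:E)%E -> mu.-integrable setT (EFin \o h).
Proof.
move=> mh h0 hv; apply/integrableP; split.
  exact/measurable_realfun.measurable_EFinP.
under eq_integral => w _ do rewrite gee0_abs ?lee_fin //.
exact: le_lt_trans hv (ltry _).
Qed.

Lemma integral_comb_EFin {h1 h2 : Omega -> R} {v1 v2 : R} (c1 c2 : R) :
  mu.-integrable setT (EFin \o h1) -> mu.-integrable setT (EFin \o h2) ->
  (\int[mu]_(w in setT) (h1 w)%:E = v1%:E)%E ->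
  (\int[mu]_(w in setT) (h2 w)%:E = v2%:E)%E ->
  mu.-integrable setT (fun w => (c1 * h1 w + c2 * h2 w)%:E) /\
  (\int[mu]_(w in setT) (c1 * h1 w + c2 * h2 w)%:E = (c1 * v1 + c2 * v2)%:E)%E.
Proof.
move=> i1 i2 e1 e2.
have scaled (h : Omega -> R) c v : mu.-integrable setT (EFin \o h) ->
    (\int[mu]_(w in setT) (h w)%:E = v%:E)%E ->
    mu.-integrable setT (EFin \o (fun w => c * h w)) /\
    (\int[mu]_(w in setT) (EFin \o (fun w => (c * h w)%R)) w = (c * v)%:E)%E.
  move=> ih eh; split.
    by apply: eq_integrable (integrableZl measurableT c ih) => // w _.
  under eq_integral => w _ do rewrite /= EFinM.
  by rewrite integralZl // eh EFinM.
have [j1 f1] := scaled _ c1 _ i1 e1; have [j2 f2] := scaled _ c2 _ i2 e2.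
split; first by apply: eq_integrable (integrableD measurableT j1 j2) => // w _.
by rewrite EFinD -f1 -f2 -integralD_EFin.
Qed.
End Integration.

Section Coefficients.
Context {R : realType} {H : lmodType R[i]} {ip : H -> H -> R[i]}.
Context {d : measure_display} {Omega : measurableType d}.
Variable mu : {measure set Omega -> \bar R}.
Local Notation sq_coeff_int := (sq_coeff_int ip mu).

Lemma integrable_sq_coeff {G : Omega -> H} {f : H} {v : R} :
  weakly_measurable ip G -> (sq_coeff_int G f <= v%:E)%E ->
  mu.-integrable setT (EFin \o (fun w => cabs2 (ip f (G w)))).
Proof.
move=> mG Gv; apply: (integrable_of_integral_le mu _ _ Gv) => [|w].
  have [mRe mIm] := mG f.
  by apply: measurable_realfun.measurable_funD;
    apply: measurable_realfun.measurable_funX.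
exact: cabs2_ge0.
Qed.

Lemma analysis_opnorm2_le (G1 G2 : Omega -> H) :
  (forall f, (sq_coeff_int G1 f <= sq_coeff_int G2 f)%E) ->
  (analysis_opnorm2 ip mu G1 <= analysis_opnorm2 ip mu G2)%E.
Proof.
move=> G12; apply: ge_ereal_sup => _ [f f1 <-].
by apply: le_trans (G12 f) _; apply: ereal_sup_ubound; exists f.
Qed.
End Coefficients.

Section ParsevalFrame.
Context {R : realType} {H : lmodType R[i]} {ip : H -> H -> R[i]}.
Hypothesis hip : is_inner_product ip.
Context {d : measure_display} {Omega : measurableType d}.
Variable mu : {measure set Omega -> \bar R}.
Context {K Kadj : H -> H} {F : Omega -> H}.
Hypotheses (hKadj : is_adjoint ip K Kadj) (hF : parseval_cont_Kframe ip mu Kadj F).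

Lemma parseval_sq_integrable f :
  mu.-integrable setT (EFin \o (fun w => cabs2 (ip f (F w)))).
Proof.
by apply: (integrable_sq_coeff mu hF.1 (v := nrm2 ip (Kadj f))); rewrite hF.2.
Qed.

Lemma parseval_polarization a b :
  cintegrable mu (fun w => ip a (F w) * ip (F w) b) /\
  cintegral mu (fun w => ip a (F w) * ip (F w) b) = ip (Kadj a) (Kadj b).
Proof.
pose sq c w := cabs2 (ip (a + c *: b) (F w)).
have sq_int c := parseval_sq_integrable (a + c *: b).
have sq_val c := hF.2 (a + c *: b).
have eRe w : complex.Re (ip a (F w) * ip (F w) b) =
    4^-1 * sq 1 w + (- 4^-1) * sq (-1) w.
  by rewrite /sq !(ipDl hip) !(ipZl hip) (ipC hip b) /cabs2; simp_ReIm; field.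
have eIm w : complex.Im (ip a (F w) * ip (F w) b) =
    4^-1 * sq 'i%C w + (- 4^-1) * sq (- 'i%C) w.
  by rewrite /sq !(ipDl hip) !(ipZl hip) (ipC hip b) /cabs2; simp_ReIm; field.
have [iRe vRe] := integral_comb_EFin mu (4^-1) (- 4^-1)
  (sq_int 1) (sq_int (-1)) (sq_val _) (sq_val _).
have [iIm vIm] := integral_comb_EFin mu (4^-1) (- 4^-1)
  (sq_int 'i%C) (sq_int (- 'i%C)) (sq_val _) (sq_val _).
split; first split.
- by apply: eq_integrable iRe => // w _; rewrite eRe.
- by apply: eq_integrable iIm => // w _; rewrite eIm.
rewrite /cintegral.
under eq_integral => w _ do rewrite eRe.
under [X in Complex _ (fine X)]eq_integral => w _ do rewrite eIm.
rewrite /sq vRe vIm /= !(adjointDZ hip hKadj) !(nrm2DZ hip).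
by apply: complex_ext; rewrite /cabs2; simp_ReIm; field.
Qed.
End ParsevalFrame.

Section MPInverseFrame.
Context {R : realType} {H : lmodType R[i]} {ip : H -> H -> R[i]}.
Hypothesis hip : is_inner_product ip.
Context {d : measure_display} {Omega : measurableType d}.
Variable mu : {measure set Omega -> \bar R}.
Context {K Kadj Kdag Kdag_adj : H -> H} {F : Omega -> H}.
Hypotheses (hKadj : is_adjoint ip K Kadj) (hKdag_adj : is_adjoint ip Kdag Kdag_adj).
Hypothesis hF : parseval_cont_Kframe ip mu Kadj F.
Hypothesis KdagKKdag : forall x, Kdag (K (Kdag x)) = Kdag x.
Hypothesis KdagK_sym : forall x y, ip (Kdag (K x)) y = ip x (Kdag (K y)).
Local Notation nrm2 := (nrm2 ip).
Local Notation sq_coeff_int := (sq_coeff_int ip mu).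
Local Notation KdagF := (fun w => Kdag (F w)).

Lemma Kadj_Kdag_adj f : Kadj (Kdag_adj f) = Kdag (K f).
Proof. by apply: (ip_ext hip) => x; rewrite -hKadj -hKdag_adj KdagK_sym. Qed.

Lemma sq_coeff_int_MP_frame f : sq_coeff_int KdagF f = (nrm2 (Kdag (K f)))%:E.
Proof.
rewrite /sq_coeff_int.
under eq_integral => w _ do rewrite (adjoint_ipC hip hKdag_adj).
by rewrite -Kadj_Kdag_adj; exact: hF.2.
Qed.

Lemma MP_frame_weakly_measurable : weakly_measurable ip KdagF.
Proof.
move=> f; have [mRe mIm] := hF.1 (Kdag_adj f).
by split; [apply: eq_measurable_fun mRe | apply: eq_measurable_fun mIm] => w _;
  rewrite (adjoint_ipC hip hKdag_adj).
Qed.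

Lemma MP_frame_Bessel :
  bounded_op ip K -> bounded_op ip Kdag -> cont_Bessel ip mu KdagF.
Proof.
move=> /(bounded_op_pos hip)[MK [MK0 K_bounded]].
move=> /(bounded_op_pos hip)[MD [MD0 Kdag_bounded]].
split; first exact: MP_frame_weakly_measurable.
exists (MD * MK); split=> [|f]; first exact: mulr_gt0.
rewrite sq_coeff_int_MP_frame lee_fin -mulrA.
apply: le_trans (Kdag_bounded _) _.
by apply: ler_wpM2l; [exact: ltW | exact: K_bounded].
Qed.

Lemma MP_frame_sq_coeff_min G f : dual_cont_KBessel ip mu K F G ->
  (sq_coeff_int KdagF f <= sq_coeff_int G f)%E.
Proof.
case=> [[mG [B [_ G_Bessel]]] G_dual].
set P := Kdag (K f); set z := Kdag_adj f.
have ReKfz : complex.Re (ip (K f) z) = nrm2 P.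
  by rewrite hKadj Kadj_Kdag_adj -/P /nrm2 [ip P P]KdagK_sym KdagKKdag.
have [[iRe _] Kfz] := G_dual f z.
have vRe : (\int[mu]_(w in setT) (complex.Re (ip f (G w) * ip (F w) z))%:E =
    (nrm2 P)%:E)%E.
  by rewrite -ReKfz Kfz /= fineK // (integrable_fin_num measurableT iRe).
have vF : (\int[mu]_(w in setT) (cabs2 (ip z (F w)))%:E = (nrm2 P)%:E)%E.
  by rewrite /P -Kadj_Kdag_adj; exact: hF.2 z.
have [icomb vcomb] :=
  integral_comb_EFin mu 2 (-1) iRe (parseval_sq_integrable mu hF z) vRe vF.
rewrite sq_coeff_int_MP_frame -/P.
have -> : nrm2 P = 2 * nrm2 P + -1 * nrm2 P by ring.
rewrite -vcomb.
apply: (le_integral measurableT icomb (integrable_sq_coeff mu mG (G_Bessel f))) => w _.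
by rewrite lee_fin (ipC hip z) mulN1r; exact: ReMJ_le_cabs2.
Qed.

Hypothesis KKdagK : forall x, K (Kdag (K x)) = K x.

Lemma MP_frame_reconstruction f g :
  cintegrable mu (fun w => ip f (Kdag (F w)) * ip (F w) g) /\
  ip (K f) g = cintegral mu (fun w => ip f (Kdag (F w)) * ip (F w) g).
Proof.
have -> : (fun w => ip f (Kdag (F w)) * ip (F w) g) =
    (fun w => ip (Kdag_adj f) (F w) * ip (F w) g).
  by apply/funext => w; rewrite (adjoint_ipC hip hKdag_adj).
have [int_fg ->] := parseval_polarization hip mu hKadj hF (Kdag_adj f) g.
by rewrite Kadj_Kdag_adj -hKadj KKdagK.
Qed.

Lemma MP_frame_dual : bounded_op ip K -> bounded_op ip Kdag ->
  dual_cont_KBessel ip mu K F KdagF.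
Proof.
by move=> bK bKdag; split; [exact: MP_frame_Bessel | exact: MP_frame_reconstruction].
Qed.
End MPInverseFrame.

Theorem theorem3p4 (R : realType) (H : lmodType R[i]) (ip : H -> H -> R[i])
    (hH : is_sep_hilbert ip)
    (d : measure_display) (Omega : measurableType d)
    (mu : {measure set Omega -> \bar R})
    (K Kadj Kdag : H -> H)
    (hK : bounded_op ip K) (hKcl : closed_range ip K)
    (hKadj : is_adjoint ip K Kadj) (hKdag : is_MP_inverse ip K Kdag)
    (F : Omega -> H) (hF : parseval_cont_Kframe ip mu Kadj F) :
  dual_cont_KBessel ip mu K F (fun w => Kdag (F w)) /\
  forall G : Omega -> H, dual_cont_KBessel ip mu K F G ->
    (analysis_opnorm2 ip mu (fun w => Kdag (F w)) <= analysis_opnorm2 ip mu G)%E.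
Proof.
(* Closedness of the range only serves to guarantee that K^† exists, which
   [hKdag] already provides. *)
case: hH => hip hc _.
case: hKdag => Kdag_bounded KKdagK KdagKKdag _ KdagK_sym.
have [Kdag_adj hKdag_adj] := adjoint_exists hip hc Kdag_bounded.
split; first exact: (MP_frame_dual hip mu hKadj hKdag_adj hF KdagK_sym KKdagK hK).
move=> G G_dual; apply: analysis_opnorm2_le => f.
exact: (MP_frame_sq_coeff_min hip mu hKadj hKdag_adj hF KdagKKdag KdagK_sym G f G_dual).
Qed.
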